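(* Let $\{\pi_\theta\}_{\theta\in\Theta}$, $\Theta\subseteq\mathbb R^d$ open, be a family of stationary policies with $\theta\mapsto\pi_\theta(a|s)$ differentiable for all $s,a$, and assume each $\sigma(P_{s,a},\cdot):\mathbb R^{\mathcal S}\to\mathbb R$ is differentiable. Then $\theta\mapsto V^{\pi_\theta}(s)$ is differentiable for every $s$ and $$\nabla_\theta V^{\pi_\theta}(s)=\mathbb E\Big[\sum_{t=0}^{\infty}\gamma^t\,Q^{\pi_\theta}(s_t,a_t)\,\nabla_\theta\log\pi_\theta(a_t|s_t)\,\Big|\,s_0=s\Big],$$ where the expectation is over trajectories with $a_t\sim\pi_\theta(\cdot|s_t)$ and $s_{t+1}\sim\hat P^{\pi_\theta}_{s_t,a_t}$.
   Context: $\mathcal S$ and $\mathcal A$ are finite sets; $\Delta(\mathcal X)$ denotes the probability simplex over a finite set $\mathcal X$. $P=\{P_{s,a}\}$ with $P_{s,a}\in\Delta(\mathcal S)$ is the nominal transition kernel, $r:\mathcal S\times\mathcal A\to[0,1]$, $\gamma\in[0,1)$. A stationary policy is a map $\pi:\mathcal S\to\Delta(\mathcal A)$. A function $\sigma:\mathbb R^{\mathcal S}\to\mathbb R$ is a convex risk measure if (i) $V'\le V$ pointwise implies $\sigma(V)\le\sigma(V')$; (ii) $\sigma(V+m)=\sigma(V)-m$ for every constant $m$; (iii) $\sigma$ is convex. For each $(s,a)$ a convex risk measure $\sigma(P_{s,a},\cdot)$ is given, with penalty $D(\hat\mu,P_{s,a}):=\sup_{V}\big(-\sigma(P_{s,a},V)-\mathbb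 E_{s'\sim\hat\mu}V(s')\big)$ for $\hat\mu\in\Delta(\mathcal S)$. For a policy $\pi$, $V^\pi$ is the unique solution of $V^\pi(s)=\sum_a\pi(a|s)(r(s,a)-\gamma\sigma(P_{s,a},V^\pi))$, $Q^\pi(s,a):=r(s,a)-\gamma\sigma(P_{s,a},V^\pi)$, and $\hat P^\pi_{s,a}\in\arg\min_{\hat\mu\in\Delta(\mathcal S)}\big(D(\hat\mu,P_{s,a})+\mathbb E_{s'\sim\hat\mu}V^\pi(s')\big)$. *)

From HB Require Import structures.
From mathcomp Require Import all_boot all_order all_algebra.
From mathcomp Require Import all_classical all_reals all_analysis.
Set Implicit Arguments.
Unset Strict Implicit.
Unset Printing Implicit Defensive.
Import Order.TTheory GRing.Theory Num.Theory.
Import numFieldNormedType.Exports.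
Local Open Scope ring_scope.
Local Open Scope classical_set_scope.

Definition is_dist (R : realType) (X : finType) (mu : X -> R) : Prop :=
  (forall x, 0 <= mu x) /\ \sum_(x : X) mu x = 1.

Definition expect (R : realType) (X : finType) (mu : X -> R) (V : X -> R) : R :=
  \sum_(x : X) mu x * V x.

Definition convex_risk_measure (R : realType) (X : finType)
  (rho : (X -> R) -> R) : Prop :=
  [/\ (forall V V' : X -> R, (forall x, V' x <= V x) -> rho V <= rho V'),
      (forall (V : X -> R) (m : R), rho (fun x => V x + m) = rho V - m) &
      (forall (V V' : X -> R) (l : R), 0 <= l <= 1 ->
         rho (fun x => l * V x + (1 - l) * V' x) <= l * rho V + (1 - l) * rho V')].

(* penalty D(muhat, P_{s,a}) = sup_V (-sigma(P_{s,a},V) - E_muhat V), with rho = sigma(P_{s,a},.) *)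
Definition penalty (R : realType) (X : finType) (rho : (X -> R) -> R)
  (muhat : X -> R) : \bar R :=
  ereal_sup [set ((- rho V - expect muhat V)%:E) | V in [set: X -> R]].

Definition bellman (R : realType) (S A : finType) (r : S -> A -> R) (gamma : R)
  (rho : S -> A -> (S -> R) -> R) (pi : S -> A -> R) (V : S -> R) : Prop :=
  forall s, V s = \sum_(a : A) pi s a * (r s a - gamma * rho s a V).

Definition Qfun (R : realType) (S A : finType) (r : S -> A -> R) (gamma : R)
  (rho : S -> A -> (S -> R) -> R) (V : S -> R) (s : S) (a : A) : R :=
  r s a - gamma * rho s a V.

(* law of s_t for the chain s_0 = s0, a_t ~ pi(.|s_t), s_{t+1} ~ Ph_{s_t,a_t} *)
Fixpoint state_dist (R : realType) (S A : finType) (pi : S -> A -> R)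
  (Ph : S -> A -> S -> R) (s0 : S) (t : nat) : S -> R :=
  match t with
  | 0 => fun s => (s == s0)%:R
  | t'.+1 => fun s'' => \sum_(s' : S) \sum_(a : A)
               state_dist pi Ph s0 t' s' * pi s' a * Ph s' a s''
  end.

Definition grad (R : realType) (d : nat) (f : 'rV[R]_d -> R) (th : 'rV[R]_d)
  : 'rV[R]_d := \row_(i < d) ('D_(delta_mx 0 i) f th).

Definition of_rV (R : realType) (S : finType) (w : 'rV[R]_#|S|) : S -> R :=
  fun s => w ord0 (enum_rank s).

From HB Require Import structures.
From mathcomp Require Import all_boot all_order all_algebra.
From mathcomp Require Import all_classical all_reals all_analysis.
From mathcomp Require Import ring lra.
Set Implicit Arguments.
Unset Strict Implicit.
Unset Printing Implicit Defensive.
Import Order.TTheory GRing.Theory Num.Theory.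
Import numFieldNormedType.Exports.
Local Open Scope ring_scope.
Local Open Scope classical_set_scope.

(* Subtracting the Bellman equations at [th] and [th + h], the value increment
   [e_h = V(th + h) - V(th)] satisfies
     [e_h = sum_a (pi_(th+h) - pi_th) Q - gamma sum_a pi_(th+h) (sigma V(th+h) - sigma V(th))].
   A differentiable convex risk measure has derivative [- E_Phat] at [V(th)]: the
   gradient is a probability attaining the dual representation, so it is bounded by
   the optimal [Phat]. Hence the risk increment is [- Phat e_h + o(|e_h|)], and
   contraction arguments (the first giving [|e_h| = O(|h|)]) show that [e_h] agrees to
   first order with the solution [x_h] of [x = sum_a (d pi . h) Q + gamma P^pi Phat x].
   Unrolling this fixed point along the chain [s_(t+1) ~ Phat] telescopes into the
   partial sums of the policy-gradient series, up to the remainder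
   [gamma^N E[x(s_N)] -> 0]; [pi grad(log pi) = grad pi] rewrites the summands. *)

Lemma mx_norm_ge_entry (R : realType) m n (M : 'M[R]_(m, n)) i j : `|M i j| <= `|M|.
Proof.
have -> : `|M| = mx_norm M by []; rewrite mx_normrE.
by apply/bigmax_geP; right => /=; exists (i, j).
Qed.

Lemma mx_norm_le (R : realType) m n (M : 'M[R]_(m, n)) c :
  0 <= c -> (forall i j, `|M i j| <= c) -> `|M| <= c.
Proof.
move=> c0 Mc; have -> : `|M| = mx_norm M by []; rewrite mx_normrE.
by apply: bigmax_le => // -[i j] _; apply: Mc.
Qed.

Lemma linear_rV_norm_le (R : realType) d (L : {linear 'rV[R]_d -> R}) h :
  `|L h| <= (\sum_i `|L (delta_mx 0 i)|) * `|h|.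
Proof.
rewrite {1}(row_sum_delta h) linear_sum mulr_suml.
apply: (le_trans (ler_norm_sum _ _ _)); apply: ler_sum => i _.
by rewrite linearZ normrM mulrC ler_wpM2l ?mx_norm_ge_entry.
Qed.

Lemma ler_sum_term (R : realType) (T : finType) (F : T -> R) t :
  (forall t, 0 <= F t) -> F t <= \sum_t F t.
Proof. by move=> F0; rewrite (bigD1 t) //= lerDl sumr_ge0. Qed.

Lemma norm_avg_le (R : realType) (T : finType) (w x : T -> R) M :
  is_dist w -> (forall t, `|x t| <= M) -> `|\sum_t w t * x t| <= M.
Proof.
move=> [w0 w1] xM; apply: (le_trans (ler_norm_sum _ _ _)).
rewrite -[M]mul1r -w1 mulr_suml; apply: ler_sum => t _.
by rewrite normrM ger0_norm // ler_wpM2l.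
Qed.

Lemma dist_le1 (R : realType) (T : finType) (w : T -> R) t :
  is_dist w -> 0 <= w t <= 1.
Proof. by case=> w0 w1; rewrite w0 -w1 ler_sum_term. Qed.

Lemma contraction_bound (R : realType) (T : finType) (g b : R) (x : T -> R) :
  0 <= g < 1 ->
  (forall M, (forall t, `|x t| <= M) -> forall t, `|x t| <= b + g * M) ->
  forall t, `|x t| <= b / (1 - g).
Proof.
move=> /andP[g0 g1] xb t0.
set M := \big[Num.max/0]_t `|x t|.
have xM t : `|x t| <= M by apply/bigmax_geP; right; exists t.
have MbM : M <= b + g * M.
  apply: bigmax_le => [|t _]; last exact: xb.
  exact: le_trans (normr_ge0 _) (xb M xM t0).
by apply: (le_trans (xM t0)); rewrite ler_pdivlMr; nra.
Qed.

Lemma near_forall2 (T : topologicalType) (x0 : T) (I J : finType) (P : I -> J -> T -> Prop) :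
  (forall i j, \forall x \near x0, P i j x) -> \forall x \near x0, forall i j, P i j x.
Proof. by move=> FP; apply: filter_forall => i; apply: filter_forall => j; exact: FP. Qed.

Section Differentials.
Variables (R : realType) (V : normedModType R).
Implicit Types (f : V -> R) (x v : V).

Lemma diff_approx {f x} {e : R} : differentiable f x -> 0 < e ->
  \forall h \near (0 : V), `|f (x + h) - f x - 'd f x h| <= e * `|h|.
Proof.
move=> /diff_locally /eqaddoP fx e0; apply: filterS (fx e e0) => h /=.
by rewrite !fctE /= [h + x]addrC opprD addrA.
Qed.

Lemma diff_of_approx f x (df : {linear V -> R}) : continuous df ->
  (forall e, 0 < e -> \forall h \near (0 : V), `|f (x + h) - f x - df h| <= e * `|h|) ->
  differentiable f x /\ 'd f x = df :> (V -> R).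
Proof.
move=> dfc fx.
have fxE : f \o shift x = cst (f x) + df +o_ 0 id.
  apply/eqaddoP => e e0; apply: filterS (fx e e0) => h /=.
  by rewrite !fctE /= [h + x]addrC opprD addrA.
have dfE := diff_unique dfc fxE.
by split => //; apply/diff_locallyP; rewrite dfE.
Qed.

Lemma diff_le_of_incr f x v c : differentiable f x ->
  (exists2 dl : R, 0 < dl & forall l, 0 < l < dl -> f (x + l *: v) - f x <= l * c) ->
  'd f x v <= c.
Proof.
move=> df [dl dl0 fc]; apply/ler_addgt0Pr => e e0.
set nv := `|v|; have nv0 : 0 <= nv := normr_ge0 v.
have ee0 : 0 < e / (nv + 1) by rewrite divr_gt0 //; lra.
have /nbhs_norm0P[r r0 fr] := diff_approx df ee0.
set l := Num.min (dl / 2) (r / (2 * (nv + 1))).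
have l1 : l <= dl / 2 by rewrite ge_min lexx.
have l2 : l <= r / (2 * (nv + 1)) by rewrite ge_min lexx orbT.
have l0 : 0 < l by rewrite lt_min !divr_gt0 //; lra.
have lvr : `|l *: v| < r.
  rewrite normrZ gtr0_norm // -/nv.
  have : r / (2 * (nv + 1)) * (2 * (nv + 1)) = r by rewrite divfK //; lra.
  nra.
have := fr _ lvr; rewrite linearZ /= normrZ gtr0_norm // -/nv ler_norml => /andP[fl _].
move: fl; rewrite -[l *: 'd f x v]/(l * 'd f x v) => fl.
have := fc l; rewrite l0 /= => /(_ ltac:(lra)) fcl.
have : e / (nv + 1) * nv <= e by rewrite mulrAC ler_pdivrMr; [nra | lra].
by move=> enl; rewrite -(ler_pM2l l0); nra.
Qed.

Lemma diff_ge_of_decr f x v c : differentiable f x ->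
  (exists2 dl : R, 0 < dl & forall l, 0 < l < dl -> l * c <= f (x + l *: v) - f x) ->
  c <= 'd f x v.
Proof.
move=> df [dl dl0 fc].
suff : 'd (- f) x v <= - c by rewrite diffN // !fctE lerN2.
apply: diff_le_of_incr; first exact: differentiableN.
by exists dl => // l /fc; rewrite !fctE; lra.
Qed.

Lemma diff_eq_of_minorant f x (ell : V -> R) : (forall t v, ell (t *: v) = t * ell v) ->
  differentiable f x ->
  (\forall h \near (0 : V), f x + ell h <= f (x + h)) -> forall v, 'd f x v = ell v.
Proof.
move=> ellZ df /nbhs_norm0P[r r0 fr] v.
have ell_le w : ell w <= 'd f x w.
  apply: diff_ge_of_decr => //; have nw := normr_ge0 w.
  exists (r / (`|w| + 1)); first by rewrite divr_gt0 //; lra.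
  move=> l /andP[l0 l1]; rewrite -ellZ.
  have rE : r / (`|w| + 1) * (`|w| + 1) = r by rewrite divfK //; lra.
  have /fr /= : `|l *: w| < r by rewrite normrZ gtr0_norm //; nra.
  lra.
apply/eqP; rewrite eq_le ell_le andbT.
by have := ell_le (- v); rewrite linearN -scaleN1r ellZ; lra.
Qed.

End Differentials.

Lemma convex_diff_le (R : realType) (V : normedModType R) (f : V -> R) x u :
  (forall y z l, 0 <= l <= 1 -> f (l *: y + (1 - l) *: z) <= l * f y + (1 - l) * f z) ->
  differentiable f x -> 'd f x u <= f (x + u) - f x.
Proof.
move=> fconv df; apply: diff_le_of_incr => //; exists 1 => // l /andP[l0 l1].
have -> : x + l *: u = l *: (x + u) + (1 - l) *: x.
  by rewrite scalerDr scalerBl scale1r addrAC subrKC.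
by have := fconv (x + u) x l ltac:(rewrite (ltW l0) (ltW l1)); lra.
Qed.

Definition to_rV (R : realType) (S : finType) (V : S -> R) : 'rV[R]_#|S| :=
  \row_k V (enum_val k).

Section RowVectorEncoding.
Variables (R : realType) (S : finType).
Implicit Types (v w : 'rV[R]_#|S|) (s : S).

Lemma of_rVK (V : S -> R) : of_rV (to_rV V) = V.
Proof. by apply/funext => s; rewrite /of_rV /to_rV mxE enum_rankK. Qed.

Lemma of_rVD v w s : of_rV (v + w) s = of_rV v s + of_rV w s.
Proof. by rewrite /of_rV !mxE. Qed.

Lemma of_rVB v w s : of_rV (v - w) s = of_rV v s - of_rV w s.
Proof. by rewrite /of_rV !mxE. Qed.

Lemma of_rVZ (a : R) v s : of_rV (a *: v) s = a * of_rV v s.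
Proof. by rewrite /of_rV !mxE. Qed.

Lemma of_rV_const (c : R) s : of_rV (const_mx c) s = c.
Proof. by rewrite /of_rV mxE. Qed.

Lemma linear_rV_expand (L : {linear 'rV[R]_#|S| -> R}) w :
  L w = \sum_s of_rV w s * L (delta_mx 0 (enum_rank s)).
Proof.
rewrite {1}(row_sum_delta w) linear_sum [RHS](reindex (@enum_val S predT)) /=.
  by apply: eq_bigr => k _; rewrite linearZ /of_rV enum_valK.
by exists (@enum_rank S) => s _; [exact: enum_valK | exact: enum_rankK].
Qed.

End RowVectorEncoding.

Lemma penalty_ge (R : realType) (S : finType) (rho : (S -> R) -> R) mu W :
  ((- rho W - expect mu W)%:E <= penalty rho mu)%E.
Proof. by apply: ereal_sup_ubound; exists W. Qed.

Section RiskEnvelope.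
Variables (R : realType) (S : finType) (rho : (S -> R) -> R).
Hypothesis rho_risk : convex_risk_measure rho.
Let f (w : 'rV[R]_#|S|) := rho (of_rV w).
Hypothesis f_diff : forall w, differentiable f w.
Variable V0 : S -> R.
Let v0 := to_rV V0.

Let mu s := - 'd f v0 (delta_mx 0 (enum_rank s)).

Lemma risk_subgradient w : 'd f v0 w <= f (v0 + w) - f v0.
Proof.
case: rho_risk => _ _ rho_conv; apply: convex_diff_le => // y z l /rho_conv; rewrite /f.
suff -> : of_rV (l *: y + (1 - l) *: z) = fun s => l * of_rV y s + (1 - l) * of_rV z s by [].
by apply/funext => s; rewrite of_rVD !of_rVZ.
Qed.

Lemma risk_diffE w : 'd f v0 w = - \sum_s mu s * of_rV w s.
Proof. by rewrite linear_rV_expand -sumrN; apply: eq_bigr => s _; rewrite /mu; ring. Qed.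

Lemma risk_grad_dist : is_dist mu.
Proof.
case: rho_risk => rho_mono rho_transl _.
have f_shift c : f (v0 + const_mx c) = rho V0 - c.
  rewrite /f -rho_transl; congr rho; apply/funext => s.
  by rewrite of_rVD of_rV_const /v0 of_rVK.
have f_v0 : f v0 = rho V0 by rewrite /f /v0 of_rVK.
split=> [s|].
  rewrite /mu oppr_ge0; apply: (le_trans (risk_subgradient _)).
  rewrite subr_le0; apply: rho_mono => s'.
  by rewrite of_rVD lerDl /of_rV mxE ler0n.
have up := risk_subgradient (const_mx 1); have down := risk_subgradient (const_mx (-1)).
have sum_const c : \sum_s mu s * of_rV (const_mx c) s = c * \sum_s mu s.
  by rewrite mulr_sumr; apply: eq_bigr => s _; rewrite of_rV_const mulrC.
by rewrite !risk_diffE !sum_const !f_shift f_v0 in up down; lra.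
Qed.

Lemma penalty_risk_grad : (penalty rho mu <= (- rho V0 - expect mu V0)%:E)%E.
Proof.
apply: ge_ereal_sup => _ [W _ <-]; rewrite lee_fin.
have := risk_subgradient (to_rV W - v0).
rewrite subrKC risk_diffE /f /v0 !of_rVK.
suff -> : \sum_s mu s * of_rV (to_rV W - to_rV V0) s = expect mu W - expect mu V0 by lra.
by rewrite /expect -sumrB; apply: eq_bigr => s _; rewrite of_rVB !of_rVK mulrBr.
Qed.

Variable Ph : S -> R.
Hypothesis Ph_opt : forall mu, is_dist mu ->
  (penalty rho Ph + (expect Ph V0)%:E <= penalty rho mu + (expect mu V0)%:E)%E.

Lemma risk_minorant W : rho V0 - expect Ph W + expect Ph V0 <= rho W.
Proof.
have := leeD2r (expect Ph V0)%:E (penalty_ge rho Ph W).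
move=> /le_trans /(_ (le_trans (Ph_opt risk_grad_dist) (leeD2r _ penalty_risk_grad))).
by rewrite -!EFinD lee_fin; lra.
Qed.

Lemma risk_envelope w : 'd f v0 w = - \sum_s Ph s * of_rV w s.
Proof.
apply: (diff_eq_of_minorant (ell := fun w => - \sum_s Ph s * of_rV w s)) => //.
  by move=> t v; rewrite mulrN mulr_sumr; congr (- _); apply: eq_bigr => s _; rewrite of_rVZ mulrCA.
near=> h; have := risk_minorant (of_rV (v0 + h)).
suff -> : expect Ph (of_rV (v0 + h)) = expect Ph V0 + \sum_s Ph s * of_rV h s.
  by rewrite /f /v0 of_rVK; lra.
by rewrite /expect -big_split; apply: eq_bigr => s _; rewrite of_rVD /v0 of_rVK mulrDr.
Unshelve. all: by end_near.
Qed.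

End RiskEnvelope.

Lemma risk_lipschitz (R : realType) (S : finType) (rho : (S -> R) -> R) (V W : S -> R) M :
  convex_risk_measure rho -> (forall s, `|W s - V s| <= M) -> `|rho W - rho V| <= M.
Proof.
case=> rho_mono rho_transl _ WV.
have lo : rho V - M <= rho W.
  by rewrite -rho_transl; apply: rho_mono => s; have := WV s; rewrite ler_norml; lra.
have hi : rho W <= rho V + M.
  rewrite -[M]opprK -rho_transl; apply: rho_mono => s.
  by have := WV s; rewrite ler_norml; lra.
by rewrite ler_norml; lra.
Qed.

Definition discounted_fix (R : realType) (T : finType) (K : T -> T -> R) (g : R)
  (y : T -> R) : T -> R :=
  let A := 1%:M - g *: \matrix_(i, j) K (enum_val i) (enum_val j) : 'M[R]_#|T| in
  fun t => (invmx A *m \col_i y (enum_val i)) (enum_rank t) 0.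

Section DiscountedFixpoint.
Variables (R : realType) (T : finType) (K : T -> T -> R) (g : R).
Hypotheses (g01 : 0 <= g < 1) (K_dist : forall t, is_dist (K t)).

Let A := 1%:M - g *: \matrix_(i, j) K (enum_val i) (enum_val j) : 'M[R]_#|T|.

Let resolvent_mul_entry (w : 'cV[R]_#|T|) k : (A *m w) k 0 =
  w k 0 - g * \sum_t K (enum_val k) t * w (enum_rank t) 0.
Proof.
rewrite /A mulmxBl mul1mx -scalemxAl !mxE; congr (_ - g * _).
rewrite [RHS](reindex (@enum_val T predT)) /=.
  by apply: eq_bigr => j _; rewrite !mxE enum_valK.
by exists (@enum_rank T) => t _; [exact: enum_valK | exact: enum_rankK].
Qed.

Lemma discounted_fix_eq0 (x : T -> R) :
  (forall t, x t = g * \sum_t' K t t' * x t') -> forall t, x t = 0.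
Proof.
move=> x_fix t; apply/eqP; rewrite -normr_le0 -(mul0r (1 - g)^-1).
have g0 : 0 <= g by case/andP: g01.
apply: contraction_bound => // M xM t'.
by rewrite x_fix add0r normrM ger0_norm // ler_wpM2l ?norm_avg_le.
Qed.

Lemma discounted_resolvent_unit : A \in unitmx.
Proof.
rewrite -unitmx_tr -row_free_unit; apply: inj_row_free => v vA.
have Av : A *m v^T = 0 by apply: trmx_inj; rewrite trmx_mul trmxK vA trmx0.
pose x t := v 0 (enum_rank t).
have x0 : forall t, x t = 0.
  apply: discounted_fix_eq0 => t.
  have /eqP := congr1 (fun m : 'cV[R]_#|T| => m (enum_rank t) 0) Av.
  rewrite resolvent_mul_entry !mxE enum_rankK subr_eq0 /x => /eqP ->.
  by congr (g * _); apply: eq_bigr => t' _; rewrite !mxE.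
by apply/rowP => k; have := x0 (enum_val k); rewrite /x enum_valK mxE.
Qed.

Lemma discounted_fixP y t :
  discounted_fix K g y t = y t + g * \sum_t' K t t' * discounted_fix K g y t'.
Proof.
rewrite /discounted_fix -/A; set x := invmx A *m _.
have /(congr1 (fun m : 'cV[R]_#|T| => m (enum_rank t) 0)) :
  A *m x = \col_i y (enum_val i) by rewrite /x mulKVmx ?discounted_resolvent_unit.
by rewrite resolvent_mul_entry !mxE enum_rankK => <-; rewrite subrK.
Qed.

Lemma discounted_fix_unique (x y : T -> R) :
  (forall t, x t = y t + g * \sum_t' K t t' * x t') -> x = discounted_fix K g y.
Proof.
move=> x_fix; apply/funext => t; apply/eqP; rewrite -subr_eq0; apply/eqP; move: t.
apply: discounted_fix_eq0 => t.
transitivity (g * (\sum_t' K t t' * x t' - \sum_t' K t t' * discounted_fix K g y t')).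
  by rewrite x_fix discounted_fixP; ring.
by rewrite -sumrB; congr (g * _); apply: eq_bigr => t' _; rewrite mulrBr.
Qed.

End DiscountedFixpoint.

Definition chain_kernel (R : realType) (S A : finType) (p : S -> A -> R)
  (Ph : S -> A -> S -> R) (s s' : S) : R := \sum_a p s a * Ph s a s'.

Section MarkovChain.
Variables (R : realType) (S A : finType) (p : S -> A -> R) (Ph : S -> A -> S -> R).
Hypotheses (p_dist : forall s, is_dist (p s)) (Ph_dist : forall s a, is_dist (Ph s a)).

Lemma chain_kernel_dist s : is_dist (chain_kernel p Ph s).
Proof.
split=> [s'|].
  by apply: sumr_ge0 => a _; apply: mulr_ge0; [case: (p_dist s) | case: (Ph_dist s a)].
rewrite /chain_kernel exchange_big /= -(proj2 (p_dist s)); apply: eq_bigr => a _.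
by rewrite -mulr_sumr (proj2 (Ph_dist s a)) mulr1.
Qed.

Lemma expect_chain_kernel s (x : S -> R) :
  \sum_s' chain_kernel p Ph s s' * x s' = \sum_a p s a * \sum_s' Ph s a s' * x s'.
Proof.
rewrite /chain_kernel; under eq_bigr do rewrite mulr_suml.
rewrite exchange_big /=; apply: eq_bigr => a _.
by rewrite mulr_sumr; apply: eq_bigr => s' _; rewrite mulrA.
Qed.

Lemma expect_state_distS s0 t (x : S -> R) :
  \sum_s' state_dist p Ph s0 t.+1 s' * x s' =
  \sum_s' state_dist p Ph s0 t s' * \sum_s'' chain_kernel p Ph s' s'' * x s''.
Proof.
rewrite /=; under eq_bigr do rewrite mulr_suml.
rewrite exchange_big /=; apply: eq_bigr => s' _.
rewrite mulr_sumr; apply: eq_bigr => s'' _.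
by rewrite /chain_kernel !mulr_suml mulr_sumr; apply: eq_bigr => a _; ring.
Qed.

Lemma state_dist_dist s0 t : is_dist (state_dist p Ph s0 t).
Proof.
elim: t => [|t [sd0 sd1]].
  split=> [s|]; first exact: ler0n.
  by rewrite /= (bigD1 s0) //= eqxx big1 ?addr0 // => s /negbTE ->.
split=> [s|].
  apply: sumr_ge0 => s' _; apply: sumr_ge0 => a _.
  by apply: mulr_ge0; [apply: mulr_ge0; [exact: sd0 | case: (p_dist s')] | case: (Ph_dist s' a)].
transitivity (\sum_s' state_dist p Ph s0 t.+1 s' * 1); first by apply: eq_bigr => s' _; rewrite mulr1.
rewrite expect_state_distS -[RHS]sd1; apply: eq_bigr => s' _.
by under eq_bigr do rewrite mulr1; rewrite (proj2 (chain_kernel_dist s')) mulr1.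
Qed.

Lemma discounted_sum_telescope (g : R) (x y : S -> R) s0 :
  (forall s, x s = y s + g * \sum_s' chain_kernel p Ph s s' * x s') ->
  forall N, \sum_(t < N) g ^+ t * \sum_s' state_dist p Ph s0 t s' * y s' =
    x s0 - g ^+ N * \sum_s' state_dist p Ph s0 N s' * x s'.
Proof.
move=> x_fix; elim=> [|N IH].
  rewrite big_ord0 expr0 mul1r /= (bigD1 s0) //= eqxx mul1r big1 ?addr0 ?subrr //.
  by move=> s /negbTE ->; rewrite mul0r.
have yE : \sum_s' state_dist p Ph s0 N s' * y s' = \sum_s' state_dist p Ph s0 N s' * x s'
    - g * \sum_s' state_dist p Ph s0 N.+1 s' * x s'.
  rewrite expect_state_distS mulr_sumr -sumrB; apply: eq_bigr => s' _; rewrite (x_fix s'); ring.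
by rewrite big_ord_recr /= IH yE exprSr; ring.
Qed.

End MarkovChain.

Lemma sum_mul_combination (R : realType) (T : finType) (w x y : T -> R) c :
  \sum_t w t * (c * x t + y t) = c * \sum_t w t * x t + \sum_t w t * y t.
Proof. by rewrite mulr_sumr -big_split; apply: eq_bigr => t _ /=; ring. Qed.

Definition policy_grad_value (R : realType) (S A : finType) (d : nat) (g : R)
  (p : S -> A -> R) (Ph : S -> A -> S -> R) (Dp : S -> A -> 'rV[R]_d -> R)
  (Q : S -> A -> R) (h : 'rV[R]_d) : S -> R :=
  discounted_fix (chain_kernel p Ph) g (fun s => \sum_a Dp s a h * Q s a).

Section PolicyGradValue.
Variables (R : realType) (S A : finType) (d : nat) (g : R) (p : S -> A -> R).
Variables (Ph : S -> A -> S -> R) (Dp : S -> A -> {linear 'rV[R]_d -> R}) (Q : S -> A -> R).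
Hypotheses (g01 : 0 <= g < 1) (p_dist : forall s, is_dist (p s)).
Hypothesis Ph_dist : forall s a, is_dist (Ph s a).
Let X := policy_grad_value g p Ph Dp Q.

Lemma policy_grad_valueP h s :
  X h s = \sum_a Dp s a h * Q s a + g * \sum_a p s a * \sum_s' Ph s a s' * X h s'.
Proof.
by rewrite /X /policy_grad_value discounted_fixP ?expect_chain_kernel //; apply: chain_kernel_dist.
Qed.

Lemma policy_grad_value_linear c h1 h2 s :
  X (c *: h1 + h2) s = c * X h1 s + X h2 s.
Proof.
suff -> : X (c *: h1 + h2) = fun s => c * X h1 s + X h2 s by [].
symmetry; apply: discounted_fix_unique => //; first exact: chain_kernel_dist.
move=> t; rewrite expect_chain_kernel (policy_grad_valueP h1) (policy_grad_valueP h2).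
have -> : \sum_a p t a * \sum_s' Ph t a s' * (c * X h1 s' + X h2 s') =
    c * \sum_a p t a * \sum_s' Ph t a s' * X h1 s' + \sum_a p t a * \sum_s' Ph t a s' * X h2 s'.
  by rewrite -sum_mul_combination; apply: eq_bigr => a _; rewrite sum_mul_combination.
have -> : \sum_a Dp t a (c *: h1 + h2) * Q t a =
    c * \sum_a Dp t a h1 * Q t a + \sum_a Dp t a h2 * Q t a.
  rewrite mulr_sumr -big_split; apply: eq_bigr => a _ /=.
  by rewrite linearP -[c *: _]/(c * _); ring.
ring.
Qed.
End PolicyGradValue.

Lemma nbhs0_norm_lt (R : realType) (V : normedModType R) (r : R) :
  0 < r -> \forall h \near (0 : V), `|h| < r.
Proof. by move=> r0; apply/nbhs_norm0P; exists r. Qed.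

Lemma residual_summand_le (R : realType) (x1 q x2 E w tau g eta nh k c : R) :
  0 <= g <= 1 -> 0 <= w <= 1 -> 0 <= k -> 0 <= c -> 0 <= nh <= eta ->
  `|x1| <= eta * nh -> `|x2| <= k * nh -> `|E| <= c * nh -> `|tau| <= eta * (c * nh) ->
  `|x1 * q + g * (x2 * E) - g * (w * tau)| <= eta * nh * `|q| + (k * c + c) * (eta * nh).
Proof.
move=> /andP[g0 g1] /andP[w0 w1] k0 c0 /andP[nh0 nheta] x1b x2b Eb taub.
apply: (le_trans (ler_normB _ _)); rewrite !normrM (ger0_norm g0) (ger0_norm w0).
apply: (le_trans (lerD (ler_normD _ _) (lexx _))); rewrite !normrM (ger0_norm g0).
have x2E0 : 0 <= `|x2| * `|E| by rewrite mulr_ge0.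
have t1 : `|x1| * `|q| <= eta * nh * `|q| by rewrite ler_wpM2r.
have t2 : `|x2| * `|E| <= (k * nh) * (c * nh) by rewrite ler_pM.
have kcn : 0 <= k * c * nh by rewrite !mulr_ge0.
have t3 : (k * nh) * (c * nh) <= (k * c) * (eta * nh) by nra.
have gw1 : g * w <= 1 by rewrite mulr_ile1.
have tau0 := normr_ge0 tau.
nra.
Qed.

(* [pp h], [e h] and [sg s a h] stand for [pi_(th+h)], [V(th+h) - V(th)] and
   [sigma(V(th+h)) - sigma(V(th))]; only their first-order behaviour is assumed. *)
Section ValuePerturbation.
Variables (R : realType) (S A : finType) (d : nat) (g : R) (p : S -> A -> R).
Variables (pp : 'rV[R]_d -> S -> A -> R) (Ph : S -> A -> S -> R).
Variables (Dp : S -> A -> {linear 'rV[R]_d -> R}) (Q : S -> A -> R).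
Variables (e : 'rV[R]_d -> S -> R) (sg : S -> A -> 'rV[R]_d -> R).
Hypotheses (g01 : 0 <= g < 1) (p_dist : forall s, is_dist (p s)).
Hypothesis Ph_dist : forall s a, is_dist (Ph s a).
Hypothesis pp_dist : \forall h \near (0 : 'rV[R]_d), forall s, is_dist (pp h s).
Hypothesis e_bellman : \forall h \near (0 : 'rV[R]_d), forall s,
  e h s = \sum_a ((pp h s a - p s a) * Q s a - g * (pp h s a * sg s a h)).
Hypothesis sg_le : forall h M, (forall s, `|e h s| <= M) -> forall s a, `|sg s a h| <= M.
Hypothesis sg_envelope : forall eps, 0 < eps -> exists2 dl, 0 < dl & forall h M, M < dl ->
  (forall s, `|e h s| <= M) -> forall s a, `|sg s a h + \sum_s' Ph s a s' * e h s'| <= eps * M.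
Hypothesis pp_diff : forall eps, 0 < eps -> \forall h \near (0 : 'rV[R]_d), forall s a,
  `|pp h s a - p s a - Dp s a h| <= eps * `|h|.

Let g0 : 0 <= g. Proof. by case/andP: g01. Qed.
Let g1 : g < 1. Proof. by case/andP: g01. Qed.

Let Kp := \sum_s \sum_a \sum_i `|Dp s a (delta_mx 0 i)|.
Let CQ := \sum_s \sum_a `|Q s a|.
Let C := (Kp + 1) * CQ / (1 - g).
Let B := CQ + #|A|%:R * ((Kp + 1) * C + C).

Let Kp0 : 0 <= Kp. Proof. by do 3! (apply: sumr_ge0 => ? _). Qed.
Let CQ0 : 0 <= CQ. Proof. by do 2! (apply: sumr_ge0 => ? _). Qed.
Let C0 : 0 <= C.
Proof. by have := Kp0; have := CQ0; have := g1; move=> *; apply: divr_ge0; [apply: mulr_ge0 |]; lra. Qed.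
Let B0 : 0 <= B.
Proof.
have := Kp0; have := CQ0; have := C0; move=> *.
by apply: addr_ge0 => //; apply: mulr_ge0 => //; nra.
Qed.

Let Dp_le s a h : `|Dp s a h| <= Kp * `|h|.
Proof.
apply: (le_trans (linear_rV_norm_le _ _)); rewrite ler_wpM2r //.
have Fs0 s' : 0 <= \sum_a \sum_i `|Dp s' a (delta_mx 0 i)| by do 2! (apply: sumr_ge0 => ? _).
apply: (le_trans _ (ler_sum_term (F := fun s' => _) s Fs0)).
apply: (ler_sum_term (F := fun a => \sum_i `|Dp s a (delta_mx 0 i)|)) => a'.
exact: sumr_ge0.
Qed.

Let Q_le s : \sum_a `|Q s a| <= CQ.
Proof. by apply: (ler_sum_term (F := fun s => \sum_a `|Q s a|)) => s'; apply: sumr_ge0. Qed.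

Lemma pp_lipschitz : \forall h \near (0 : 'rV[R]_d), forall s a,
  `|pp h s a - p s a| <= (Kp + 1) * `|h|.
Proof.
apply: filterS (pp_diff ltr01) => h pph s a.
have := ler_normD (pp h s a - p s a - Dp s a h) (Dp s a h); rewrite subrK.
by have := pph s a; have := Dp_le s a h; lra.
Qed.

Lemma e_lipschitz : \forall h \near (0 : 'rV[R]_d), forall s, `|e h s| <= C * `|h|.
Proof.
move: pp_dist e_bellman pp_lipschitz; apply: filterS3 => h hd he hl s.
rewrite /C mulrAC; apply: contraction_bound => // M eM t.
rewrite he sumrB -mulr_sumr; apply: (le_trans (ler_normB _ _)); apply: lerD.
  apply: (le_trans (ler_norm_sum _ _ _)).
  apply: (le_trans (y := \sum_a (Kp + 1) * `|h| * `|Q t a|)).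
    by apply: ler_sum => a _; rewrite normrM ler_wpM2r.
  by rewrite -mulr_sumr mulrAC ler_wpM2r // ler_wpM2l ?Q_le // addr_ge0 ?Kp0.
by rewrite normrM ger0_norm // ler_wpM2l // norm_avg_le // => a; apply: sg_le.
Qed.

Let X := policy_grad_value g p Ph Dp Q.
(* [e h - X h] solves the same discounted fixed point as [X h] up to [res h], whose
   three terms (linearisation error of [pp], product of two [O(|h|)] increments,
   envelope error of [sg]) are all [o(|h|)]. *)
Let Pe h s a := \sum_s' Ph s a s' * e h s'.
Let res h t := \sum_a ((pp h t a - p t a - Dp t a h) * Q t a
  + g * ((pp h t a - p t a) * Pe h t a) - g * (pp h t a * (sg t a h + Pe h t a))).

Lemma value_error_fix h :
  (forall s, e h s = \sum_a ((pp h s a - p s a) * Q s a - g * (pp h s a * sg s a h))) ->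
  forall t, e h t - X h t = res h t + g * \sum_a p t a * \sum_s' Ph t a s' * (e h s' - X h s').
Proof.
move=> he t; rewrite he /X policy_grad_valueP // -/X.
have inner a : \sum_s' Ph t a s' * (e h s' - X h s') = Pe h t a - \sum_s' Ph t a s' * X h s'.
  by rewrite -sumrB; apply: eq_bigr => s' _; rewrite mulrBr.
under [in RHS]eq_bigr do rewrite inner.
have sumE (F G : A -> R) c : \sum_a F a + c * \sum_a G a = \sum_a (F a + c * G a).
  by rewrite mulr_sumr -big_split.
by rewrite /res !sumE -sumrB; apply: eq_bigr => a _ /=; ring.
Qed.

Lemma residual_le eta : 0 < eta ->
  \forall h \near (0 : 'rV[R]_d), forall t, `|res h t| <= eta * B * `|h|.
Proof.
move=> eta0; have [dl dl0 sg_env] := sg_envelope eta0.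
have small : \forall h \near (0 : 'rV[R]_d), `|h| <= eta /\ C * `|h| < dl.
  have C0' := C0; have r0 : 0 < Num.min eta (dl / (C + 1)) by rewrite lt_min eta0 divr_gt0 //; lra.
  apply: filterS (nbhs0_norm_lt _ r0) => h; rewrite lt_min => /andP[/ltW -> hdl]; split=> //.
  by move: hdl; rewrite ltr_pdivlMr; [nra | lra].
near=> h => t.
have hd : forall s, is_dist (pp h s) by near: h; exact: pp_dist.
have hl : forall s a, `|pp h s a - p s a| <= (Kp + 1) * `|h| by near: h; exact: pp_lipschitz.
have hD : forall s a, `|pp h s a - p s a - Dp s a h| <= eta * `|h| by near: h; exact: pp_diff.
have hC : forall s, `|e h s| <= C * `|h| by near: h; exact: e_lipschitz.
have [h_eta h_dl] : `|h| <= eta /\ C * `|h| < dl by near: h; exact: small.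
apply: (le_trans (ler_norm_sum _ _ _)).
apply: (le_trans (y := \sum_a (eta * `|h| * `|Q t a| + ((Kp + 1) * C + C) * (eta * `|h|)))).
  apply: ler_sum => a _.
  have g01' : 0 <= g <= 1 by rewrite g0 ltW.
  have k0 : 0 <= Kp + 1 by rewrite addr_ge0 ?Kp0.
  have hh : 0 <= `|h| <= eta by rewrite normr_ge0.
  have hPe : `|Pe h t a| <= C * `|h| by apply: norm_avg_le.
  exact: residual_summand_le g01' (dist_le1 a (hd t)) k0 C0 hh (hD t a) (hl t a) hPe
    (sg_env _ _ h_dl hC t a).
have := Q_le t; have : 0 <= eta * `|h| by rewrite mulr_ge0 // ltW.
rewrite big_split /= -mulr_sumr sumr_const -mulr_natl /B; nra.
Unshelve. all: by end_near.
Qed.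

Lemma value_error_small eps : 0 < eps ->
  \forall h \near (0 : 'rV[R]_d), forall s, `|e h s - X h s| <= eps * `|h|.
Proof.
move=> eps0; have B0' := B0; have g1' := g1.
set eta := eps * (1 - g) / (B + 1).
have eta0 : 0 < eta by rewrite divr_gt0 ?mulr_gt0 //; lra.
move: e_bellman (residual_le eta0); apply: filterS2 => h he hres s.
apply: (le_trans (contraction_bound (b := eta * B * `|h|) (x := fun s => e h s - X h s) g01 _ s)).
  move=> M zM t /=; rewrite value_error_fix //; apply: (le_trans (ler_normD _ _)); apply: lerD => //.
  rewrite normrM ger0_norm // ler_wpM2l // norm_avg_le // => a.
  exact: norm_avg_le.
have -> : eta * B * `|h| / (1 - g) = eps * `|h| * (B / (B + 1)) by rewrite /eta; field; lra.
have B1 : B / (B + 1) <= 1 by rewrite ler_pdivrMr; lra.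
by rewrite -[leRHS]mulr1; apply: ler_wpM2l => //; rewrite mulr_ge0 // ltW.
Qed.

End ValuePerturbation.

Lemma derive_ln (R : realType) d (q : 'rV[R]_d -> R) x v :
  differentiable q x -> 0 < q x -> 'D_v (fun t => ln (q t)) x = 'd q x v / q x.
Proof.
move=> dq q0; have [dln ln_q] := is_derive1_ln q0.
have dlnq : differentiable (@ln R) (q x) by apply/derivable1_diffP.
have dlnq_x : differentiable ((@ln R) \o q) x by apply: differentiable_comp.
rewrite (_ : (fun t => ln (q t)) = (@ln R) \o q) //.
by rewrite deriveE // diff_comp //= diff1E // derive1E ln_q.
Qed.

Section PolicyGradient.
Variables (R : realType) (S A : finType) (P : S -> A -> S -> R) (r : S -> A -> R).
Variables (gamma : R) (sigma : (S -> R) -> (S -> R) -> R) (d : nat) (Theta : set 'rV[R]_d).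
Variables (pi : 'rV[R]_d -> S -> A -> R) (V : 'rV[R]_d -> S -> R).
Variable Phat : 'rV[R]_d -> S -> A -> S -> R.
Hypotheses (gamma01 : 0 <= gamma < 1) (sigma_risk : forall s a, convex_risk_measure (sigma (P s a))).
Hypothesis Theta_open : open Theta.
Hypothesis pi_dist : forall th, Theta th -> forall s, is_dist (pi th s).
Hypothesis pi_diff : forall s a th, Theta th -> differentiable (fun t => pi t s a) th.
Hypothesis sigma_diff : forall s a (v : 'rV[R]_#|S|),
  differentiable (fun w : 'rV[R]_#|S| => sigma (P s a) (of_rV w)) v.
Hypothesis V_bellman : forall th, Theta th ->
  bellman r gamma (fun s a => sigma (P s a)) (pi th) (V th).
Hypothesis Phat_opt : forall th, Theta th -> forall s a,
  is_dist (Phat th s a) /\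
  (forall mu : S -> R, is_dist mu ->
     (penalty (sigma (P s a)) (Phat th s a) + (expect (Phat th s a) (V th))%:E
      <= penalty (sigma (P s a)) mu + (expect mu (V th))%:E)%E).
Variable th : 'rV[R]_d.
Hypothesis th_Theta : Theta th.

Let Q := Qfun r gamma (fun s a => sigma (P s a)) (V th).
Let Dp s a := 'd (fun t => pi t s a) th.
Let e h s := V (th + h) s - V th s.
Let sg s a h := sigma (P s a) (V (th + h)) - sigma (P s a) (V th).
Let X := policy_grad_value gamma (pi th) (Phat th) Dp Q.

Let pi_th_dist : forall s, is_dist (pi th s). Proof. exact: pi_dist. Qed.
Let Phat_dist s a : is_dist (Phat th s a). Proof. by case: (Phat_opt th_Theta s a). Qed.

Lemma near_Theta : \forall h \near (0 : 'rV[R]_d), Theta (th + h).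
Proof.
have : nbhs th Theta by apply: open_nbhs_nbhs; split.
by move/nbhs0P.
Qed.

Lemma value_increment_bellman : \forall h \near (0 : 'rV[R]_d), forall s,
  e h s = \sum_a ((pi (th + h) s a - pi th s a) * Q s a
                  - gamma * (pi (th + h) s a * sg s a h)).
Proof.
apply: filterS near_Theta => h hT s.
rewrite /e (V_bellman hT s) (V_bellman th_Theta s) -sumrB; apply: eq_bigr => a _.
by rewrite /Q /Qfun /sg; ring.
Qed.

Lemma risk_increment_envelope eps : 0 < eps -> exists2 dl, 0 < dl & forall h M, M < dl ->
  (forall s, `|e h s| <= M) ->
  forall s a, `|sg s a h + \sum_s' Phat th s a s' * e h s'| <= eps * M.
Proof.
move=> eps0; pose f s a := fun w : 'rV[R]_#|S| => sigma (P s a) (of_rV w).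
have : \forall w \near (0 : 'rV[R]_#|S|), forall s a,
    `|f s a (to_rV (V th) + w) - f s a (to_rV (V th)) - 'd (f s a) (to_rV (V th)) w| <= eps * `|w|.
  by apply: near_forall2 => s a; exact: diff_approx (sigma_diff s a _) eps0.
move=> /nbhs_norm0P[dl dl0 sigma_approx]; exists dl => // h M Mdl eM s a.
have M0 : 0 <= M := le_trans (normr_ge0 _) (eM s).
have wM : `|to_rV (e h)| <= M by apply: mx_norm_le => // i j; rewrite mxE.
have := sigma_approx _ (le_lt_trans wM Mdl) s a.
rewrite /f (risk_envelope (sigma_risk s a) (sigma_diff s a) (Phat_opt th_Theta s a).2).
have -> : of_rV (to_rV (V th) + to_rV (e h)) = V (th + h).
  by apply/funext => s'; rewrite of_rVD !of_rVK /e subrKC.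
rewrite !of_rVK opprK /sg => /le_trans; apply.
by rewrite ler_wpM2l // ltW.
Qed.

Lemma pi_increment_approx eps : 0 < eps -> \forall h \near (0 : 'rV[R]_d), forall s a,
  `|pi (th + h) s a - pi th s a - Dp s a h| <= eps * `|h|.
Proof.
by move=> eps0; apply: near_forall2 => s a; exact: diff_approx (pi_diff s a th_Theta) eps0.
Qed.

Lemma value_increment_approx eps : 0 < eps ->
  \forall h \near (0 : 'rV[R]_d), forall s, `|e h s - X h s| <= eps * `|h|.
Proof.
move=> eps0.
have pp_dist : \forall h \near (0 : 'rV[R]_d), forall s, is_dist (pi (th + h) s).
  by apply: filterS near_Theta => h /pi_dist.
have sg_le h M : (forall s, `|e h s| <= M) -> forall s a, `|sg s a h| <= M.
  by move=> eM s a; exact: risk_lipschitz (sigma_risk s a) eM.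
exact: (value_error_small (Dp := Dp) gamma01 pi_th_dist Phat_dist pp_dist
  value_increment_bellman sg_le risk_increment_envelope pi_increment_approx eps0).
Qed.

Lemma value_diff s :
  differentiable (fun t => V t s) th /\ 'd (fun t => V t s) th = (fun h => X h s) :> (_ -> _).
Proof.
have Xlin : linear (fun h => X h s).
  by move=> c h1 h2; exact: (policy_grad_value_linear Dp Q gamma01 pi_th_dist Phat_dist).
pose L : {linear 'rV[R]_d -> R} := HB.pack (fun h => X h s) (GRing.isLinear.Build _ _ _ _ _ Xlin).
have Lc : continuous L.
  apply: bounded_linear_continuous; apply/linear_boundedP.
  apply: filterS (nbhs_pinfty_ge (num_real (\sum_i `|L (delta_mx 0 i)|))) => M LM h.
  exact: le_trans (linear_rV_norm_le L h) (ler_wpM2r (normr_ge0 h) LM).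
apply: (diff_of_approx Lc) => eps eps0.
by apply: filterS (value_increment_approx eps0) => h /(_ s).
Qed.

Lemma grad_value s : grad (fun t => V t s) th = \row_i X (delta_mx 0 i) s.
Proof. by apply/rowP => i; rewrite !mxE deriveE ?(value_diff s).2 //; case: (value_diff s). Qed.

Lemma diff_pi_eq0 s a : pi th s a = 0 -> forall v, Dp s a v = 0.
Proof.
move=> pi0 v; apply: (diff_eq_of_minorant (ell := fun=> 0)).
- by move=> t w; rewrite mulr0.
- exact: pi_diff.
- by apply: filterS near_Theta => h hT; rewrite pi0 addr0; case: (pi_dist hT s).
Qed.

(* [pi * grad log pi = grad pi], also where [pi] vanishes and [log pi] is junk. *)
Lemma pi_derive_ln s a v : pi th s a * 'D_v (fun t => ln (pi t s a)) th = Dp s a v.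
Proof.
have := (pi_th_dist s).1 a; rewrite le_eqVlt => /orP[/eqP pi0 | pi_pos].
  by rewrite -pi0 mul0r diff_pi_eq0.
have dpi := pi_diff s a th_Theta.
by rewrite derive_ln // mulrC divfK // gt_eqF.
Qed.

Let y i s := \sum_a Dp s a (delta_mx 0 i) * Q s a.

Lemma policy_gradient_partial_sum s0 N i :
  (\sum_(t < N) (gamma ^+ t *:
      \sum_(s' : S) \sum_(a : A)
        ((state_dist (pi th) (Phat th) s0 t s' * pi th s' a * Q s' a)
         *: grad (fun t' => ln (pi t' s' a)) th))) 0 i =
  \sum_(t < N) gamma ^+ t * \sum_s' state_dist (pi th) (Phat th) s0 t s' * y i s'.
Proof.
rewrite summxE; apply: eq_bigr => t _; rewrite mxE summxE; congr (_ * _).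
apply: eq_bigr => s' _; rewrite summxE /y mulr_sumr; apply: eq_bigr => a _.
by rewrite !mxE -pi_derive_ln; ring.
Qed.

Lemma policy_gradient_cvg s0 :
  (fun N : nat => \sum_(t < N) (gamma ^+ t *:
      \sum_(s' : S) \sum_(a : A)
        ((state_dist (pi th) (Phat th) s0 t s' * pi th s' a * Q s' a)
         *: grad (fun t' => ln (pi t' s' a)) th)))
    @ \oo --> grad (fun t => V t s0) th.
Proof.
set sd := state_dist (pi th) (Phat th) s0.
have K_dist := chain_kernel_dist pi_th_dist Phat_dist.
set Mx := \sum_i \sum_s `|X (delta_mx 0 i) s|.
have Mx0 : 0 <= Mx by do 2! (apply: sumr_ge0 => ? _).
have X_le i N : `|\sum_s' sd N s' * X (delta_mx 0 i) s'| <= Mx.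
  apply: norm_avg_le; first exact: state_dist_dist.
  move=> s; apply: le_trans (ler_sum_term (F := fun s => `|X (delta_mx 0 i) s|) s _) _ => //.
  by apply: (ler_sum_term (F := fun i => \sum_s `|X (delta_mx 0 i) s|)) => j; apply: sumr_ge0.
rewrite grad_value; apply/cvgrPdist_le => eps eps0.
have eM : 0 < eps / (Mx + 1) by rewrite divr_gt0 //; lra.
have [g0 g1] : 0 <= gamma /\ gamma < 1 by apply/andP.
have /cvgrPdist_le /(_ _ eM) : gamma ^+ n @[n --> \oo] --> 0 by apply: cvg_expr; rewrite ger0_norm.
apply: filterS => N gN; apply: mx_norm_le => [|i0 i]; first exact: ltW.
have gN0 : 0 <= gamma ^+ N by rewrite exprn_ge0.
rewrite sub0r normrN ger0_norm // in gN.
rewrite (ord1 i0) !mxE policy_gradient_partial_sum.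
rewrite (discounted_sum_telescope s0 (discounted_fixP gamma01 K_dist (y i))).
rewrite opprB addrC subrK normrM ger0_norm //.
have := X_le i N; have := normr_ge0 (\sum_s' sd N s' * X (delta_mx 0 i) s').
have : gamma ^+ N * (Mx + 1) <= eps by rewrite -ler_pdivlMr //; lra.
nra.
Qed.

Lemma policy_gradient s :
  differentiable (fun t => V t s) th /\
  (fun N : nat => \sum_(t < N) (gamma ^+ t *:
      \sum_(s' : S) \sum_(a : A)
        ((state_dist (pi th) (Phat th) s t s' * pi th s' a * Q s' a)
         *: grad (fun t' => ln (pi t' s' a)) th)))
    @ \oo --> grad (fun t => V t s) th.
Proof. by split; [case: (value_diff s) | exact: policy_gradient_cvg]. Qed.

End PolicyGradient.

Theorem mainTheorem5 (R : realType) (S A : finType)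
  (P : S -> A -> S -> R) (r : S -> A -> R) (gamma : R)
  (sigma : (S -> R) -> (S -> R) -> R)
  (d : nat) (Theta : set 'rV[R]_d)
  (pi : 'rV[R]_d -> S -> A -> R) (V : 'rV[R]_d -> S -> R)
  (Phat : 'rV[R]_d -> S -> A -> S -> R) :
  (forall s a, is_dist (P s a)) ->
  (forall s a, 0 <= r s a <= 1) ->
  0 <= gamma < 1 ->
  (forall s a, convex_risk_measure (sigma (P s a))) ->
  open Theta ->
  (forall th, Theta th -> forall s, is_dist (pi th s)) ->
  (forall s a th, Theta th -> differentiable (fun t => pi t s a) th) ->
  (forall s a (v : 'rV[R]_#|S|),
     differentiable (fun w : 'rV[R]_#|S| => sigma (P s a) (of_rV w)) v) ->
  (forall th, Theta th -> bellman r gamma (fun s a => sigma (P s a)) (pi th) (V th)) ->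
  (forall th, Theta th -> forall s a,
     is_dist (Phat th s a) /\
     (forall mu : S -> R, is_dist mu ->
        (penalty (sigma (P s a)) (Phat th s a) + (expect (Phat th s a) (V th))%:E
         <= penalty (sigma (P s a)) mu + (expect mu (V th))%:E)%E)) ->
  forall th, Theta th -> forall s : S,
    differentiable (fun t => V t s) th /\
    (fun N : nat => \sum_(t < N) (gamma ^+ t *:
        \sum_(s' : S) \sum_(a : A)
          ((state_dist (pi th) (Phat th) s t s' * pi th s' a
            * Qfun r gamma (fun s1 a1 => sigma (P s1 a1)) (V th) s' a)
           *: grad (fun t' => ln (pi t' s' a)) th)))
      @ \oo --> grad (fun t => V t s) th.
Proof.
move=> _ _ gamma01 sigma_risk Theta_open pi_dist pi_diff sigma_diff V_bellman Phat_opt th th_Theta s.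
exact: (policy_gradient gamma01 sigma_risk Theta_open pi_dist pi_diff sigma_diff V_bellman
  Phat_opt th_Theta s).
Qed.
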